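(* Let $s,t\in\mathbb{R}$ with $s\ne0$, $t\neq0$, $s^2+4t>0$, and let $a,\xi\in\mathbb{C}$. Consider the equation $(\mathbf{D}_{s,t}y)(x)=a\,y(\varphi_{s,t}x)$. (All identities below are asserted at points where the involved series converge.) (1) $f(x)=\xi\,\mathrm{Exp}_{s,t}(ax)$ is a solution with $f(0)=\xi$. (2) For $\eta$ with $\mathrm{Exp}_{s,t}(a\eta)$ and $\mathrm{Exp}'_{s,t}(-a\eta)$ convergent, $f(x)=\xi\,\mathrm{Exp}_{s,t}(ax)\,\mathrm{Exp}'_{s,t}(-a\eta)$ is a solution with $f(\eta)=\xi$. (3) If $\eta>0$ and $f(x)=\mathrm{Exp}_{s,t}(ax)\mathrm{Exp}'_{s,t}(-a\eta)$ (a solution with $f(\eta)=1$), then for every function $p$ with $p(qy)=p(y)$ for all $y\ne0$, where $q=\varphi'_{s,t}/\varphi_{s,t}$, the function $g(x)=p(x)f(x)$ is also a solution, and $g(\eta)=p(\eta)$.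
   Context: $\varphi_{s,t}=\frac{s+\sqrt{s^2+4t}}{2}$, $\varphi'_{s,t}=\frac{s-\sqrt{s^2+4t}}{2}$. Generalized Fibonacci polynomials: $\{0\}_{s,t}=0$, $\{1\}_{s,t}=1$, $\{n+2\}_{s,t}=s\{n+1\}_{s,t}+t\{n\}_{s,t}$; Fibotorial $\{n\}_{s,t}!=\prod_{k=1}^n\{k\}_{s,t}$, $\{0\}_{s,t}!=1$. $\mathrm{Exp}_{s,t}(z)=\sum_{n\ge0}\varphi_{s,t}^{\binom n2}z^n/\{n\}_{s,t}!$, $\mathrm{Exp}'_{s,t}(z)=\sum_{n\ge0}\varphi_{s,t}'^{\,\binom n2}z^n/\{n\}_{s,t}!$. The $(s,t)$-derivative: $(\mathbf{D}_{s,t}f)(x)=\frac{f(\varphi_{s,t}x)-f(\varphi'_{s,t}x)}{(\varphi_{s,t}-\varphi'_{s,t})x}$ for $x\ne0$, $(\mathbf{D}_{s,t}f)(0)=f'(0)$. In the paper the $q$-periodic functions are written $G(\log_q(x))$ with $G$ periodic of period one. *)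

From Stdlib Require Import Reals.
From Coquelicot Require Import Coquelicot.

Open Scope R_scope.

Definition phi (s t : R) : R := (s + sqrt (s ^ 2 + 4 * t)) / 2.
Definition phi' (s t : R) : R := (s - sqrt (s ^ 2 + 4 * t)) / 2.

Fixpoint fibst (s t : R) (n : nat) : R :=
  match n with
  | O => 0
  | S O => 1
  | S ((S m) as k) => s * fibst s t k + t * fibst s t m
  end.

Fixpoint fibtorial (s t : R) (n : nat) : R :=
  match n with
  | O => 1
  | S m => fibtorial s t m * fibst s t (S m)
  end.

Definition binom2 (n : nat) : nat := (n * (n - 1) / 2)%nat.

Definition ExpTerm (s t : R) (z : C) (n : nat) : C :=
  Cmult (RtoC (phi s t ^ binom2 n / fibtorial s t n)) (Cpow z n).
Definition ExpTerm' (s t : R) (z : C) (n : nat) : C :=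
  Cmult (RtoC (phi' s t ^ binom2 n / fibtorial s t n)) (Cpow z n).

Definition Cseries_conv (u : nat -> C) : Prop :=
  @ex_series R_AbsRing C_R_NormedModule u.
Definition Cseries (u : nat -> C) : C :=
  (Series (fun n => fst (u n)), Series (fun n => snd (u n))).

Definition Exp_conv (s t : R) (z : C) : Prop := Cseries_conv (ExpTerm s t z).
Definition Exp'_conv (s t : R) (z : C) : Prop := Cseries_conv (ExpTerm' s t z).
Definition Exp (s t : R) (z : C) : C := Cseries (ExpTerm s t z).
Definition Exp' (s t : R) (z : C) : C := Cseries (ExpTerm' s t z).

Definition Dst_is (s t : R) (f : R -> C) (x : R) (v : C) : Prop :=
  if Req_EM_T x 0 then @is_derive R_AbsRing C_R_NormedModule f 0 v
  else v = Cdiv (Cminus (f (phi s t * x)) (f (phi' s t * x)))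
                (RtoC ((phi s t - phi' s t) * x)).

Definition solves_at (s t : R) (a : C) (y : R -> C) (x : R) : Prop :=
  Dst_is s t y x (Cmult a (y (phi s t * x))).

(* the series involved in evaluating both sides of the equation at x
   for y = Exp_{s,t}(a .) times a constant *)
Definition involved_conv (s t : R) (a : C) (x : R) : Prop :=
  Exp_conv s t (Cmult a (RtoC x)) /\
  Exp_conv s t (Cmult a (RtoC (phi s t * x))) /\
  Exp_conv s t (Cmult a (RtoC (phi' s t * x))).

From Stdlib Require Import Reals Lra Lia.
From Coquelicot Require Import Coquelicot.
Open Scope R_scope.

(** Write Exp(z) = sum c_n z^n with c_n = phi^(n choose 2) / {n}!.  Binet's formula
    (phi - phi') {n} = phi^n - phi'^n and the recursion {n+1} c_(n+1) = phi^n c_n give,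
    term by term, Exp(phi z) - Exp(phi' z) = (phi - phi') z Exp(phi z), which is the
    equation (D y)(x) = a y(phi x) at x <> 0 for y(x) = Exp(a x); at x = 0, Exp(a x) is
    a power series of positive radius with derivative a.  The normalisation
    Exp(z) Exp'(-z) = 1 is a Cauchy product whose coefficients vanish beyond degree 0 by
    the same two identities.  Multiplying the series needs absolute convergence; it
    follows from mere convergence because the coefficient ratios (1 - q) / (1 - q^(n+1)),
    q = phi'/phi or phi/phi', keep the terms away from 0 on the boundary of the disc of
    convergence.  Finally p(phi' x) = p(phi x) lets a q-periodic factor p pass through
    the difference quotient. *)

Lemma pow_neq1 (q : R) (n : nat) : Rabs q <> 1 -> (0 < n)%nat -> q ^ n <> 1.
Proof.
  intros hq hn qn1.
  assert (abs_qn1 : Rabs q ^ n = 1) by (rewrite RPow_abs, qn1; apply Rabs_R1).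
  destruct (Rlt_or_le (Rabs q) 1) as [lt1 | ge1].
  - pose proof (pow_lt_1_compat (Rabs q) n (conj (Rabs_pos q) lt1) hn); lra.
  - pose proof (Rlt_pow (Rabs q) 0 n ltac:(lra) hn); simpl in *; lra.
Qed.

Lemma exp_opp_le_Rinv (x d : R) : 0 < d <= 1 + x -> exp (- x) <= / d.
Proof.
  intros hd; pose proof (exp_ineq1_le x).
  rewrite exp_Ropp; apply Rinv_le_contravar; lra.
Qed.

Lemma CV_radius_gt0_dominated (b g : nat -> R) (A : R) : 0 <= A ->
  Rbar_lt 0 (CV_radius g) -> (forall n, Rabs (b n) <= Rabs (g n) * A ^ n) ->
  Rbar_lt 0 (CV_radius b).
Proof.
  intros hA hg hb.
  assert (rho_ex : exists rho, 0 < rho /\ Rbar_lt rho (CV_radius g)).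
  { destruct (CV_radius g) as [r | |]; simpl in hg |- *; try contradiction.
    - exists (r / 2); split; lra.
    - exists 1; split; [lra | exact I]. }
  destruct rho_ex as [rho [hrho hlt]].
  set (x := rho / (A + 1)).
  assert (hx : 0 < x) by (apply Rdiv_lt_0_compat; lra).
  assert (hxA : A * x <= rho).
  { unfold x; apply (Rmult_le_reg_r (A + 1)); [lra|]; field_simplify; nra. }
  assert (disk : CV_disk b x).
  { apply (@ex_series_le R_AbsRing R_CompleteNormedModule _ (fun n => Rabs (g n * rho ^ n))).
    - intros n; change norm with Rabs; rewrite Rabs_Rabsolu, !Rabs_mult, <- !RPow_abs.
      rewrite (Rabs_pos_eq x), (Rabs_pos_eq rho) by lra.
      apply (Rle_trans _ (Rabs (g n) * A ^ n * x ^ n));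
        [apply Rmult_le_compat_r; [apply pow_le; lra | apply hb]|].
      rewrite Rmult_assoc, <- Rpow_mult_distr; apply Rmult_le_compat_l; [apply Rabs_pos|].
      apply pow_incr; nra.
    - apply CV_disk_inside; now rewrite Rabs_pos_eq by lra. }
  apply (Rbar_lt_le_trans _ x); [exact hx|].
  exact (proj1 (Lub_Rbar_correct (CV_disk b)) x disk).
Qed.

(** * Sequences with ratios (1 - q) / (1 - q^(n+1)) *)

(* The coefficients r^(n choose 2) / {n}! of Exp and Exp' are such sequences, with
   q = r' / r for the two roots r, r' of X^2 - s X - t. *)
Section QRatio.
Variables (g : nat -> R) (q : R).
Hypotheses (g0 : g 0%nat = 1) (hq : Rabs q <> 1).
Hypothesis g_rec : forall n, g (S n) * (1 - q ^ S n) = g n * (1 - q).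

Lemma one_sub_pow_neq0 (n : nat) : (0 < n)%nat -> 1 - q ^ n <> 0.
Proof. intros hn; pose proof (pow_neq1 q n hq hn); lra. Qed.

Lemma qratio_neq0 (n : nat) : g n <> 0.
Proof.
  induction n as [|n IH]; [rewrite g0; lra|].
  intros gS0; pose proof (g_rec n) as rec; rewrite gS0, Rmult_0_l in rec.
  symmetry in rec; apply Rmult_integral in rec as [|q1]; [contradiction|].
  apply (one_sub_pow_neq0 1); [lia | simpl; lra].
Qed.

Lemma qratio_S (n : nat) : g (S n) / g n = (1 - q) / (1 - q ^ S n).
Proof.
  pose proof (qratio_neq0 n); pose proof (one_sub_pow_neq0 (S n) ltac:(lia)).
  apply (Rmult_eq_reg_r (g n * (1 - q ^ S n))).
  - transitivity (g (S n) * (1 - q ^ S n)); [field; assumption|].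
    rewrite g_rec; field; assumption.
  - now apply Rmult_integral_contrapositive.
Qed.

Lemma is_lim_qratio_lt1 : Rabs q < 1 ->
  is_lim_seq (fun n => Rabs (g (S n) / g n)) (Rabs (1 - q)).
Proof.
  intros hq1.
  apply (is_lim_seq_ext (fun n => Rabs ((1 - q) / (1 - q ^ S n)))).
  { intros n; now rewrite qratio_S. }
  assert (L : is_lim_seq (fun n => (1 - q) / (1 - q ^ S n)) ((1 - q) / (1 - 0))).
  { apply is_lim_seq_div'; [apply is_lim_seq_const | | lra].
    apply is_lim_seq_minus'; [apply is_lim_seq_const|].
    apply (is_lim_seq_incr_1 (fun n => q ^ n)); now apply is_lim_seq_geom. }
  replace ((1 - q) / (1 - 0)) with (1 - q) in L by field.
  exact (is_lim_seq_abs _ _ L).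
Qed.

Lemma is_lim_qratio_gt1 : 1 < Rabs q ->
  is_lim_seq (fun n => Rabs (g (S n) / g n)) 0.
Proof.
  intros hq1.
  assert (q0 : q <> 0) by (intros ->; rewrite Rabs_R0 in hq1; lra).
  apply (is_lim_seq_ext (fun n => Rabs ((1 - q) * (/ q) ^ S n / ((/ q) ^ S n - 1)))).
  { intros n; rewrite qratio_S, pow_inv; f_equal.
    pose proof (pow_nonzero q (S n) q0); pose proof (one_sub_pow_neq0 (S n) ltac:(lia)).
    field; split; assumption. }
  assert (L : is_lim_seq (fun n => (1 - q) * (/ q) ^ S n / ((/ q) ^ S n - 1))
                ((1 - q) * 0 / (0 - 1))).
  { assert (G : is_lim_seq (fun n => (/ q) ^ S n) 0).
    { apply (is_lim_seq_incr_1 (fun n => (/ q) ^ n)), is_lim_seq_geom.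
      rewrite Rabs_inv, <- Rinv_1; apply Rinv_1_lt_contravar; lra. }
    apply is_lim_seq_div'; [ | | lra].
    - apply is_lim_seq_mult'; [apply is_lim_seq_const | exact G].
    - apply is_lim_seq_minus'; [exact G | apply is_lim_seq_const]. }
  replace ((1 - q) * 0 / (0 - 1)) with 0 in L by field.
  rewrite <- Rabs_R0; exact (is_lim_seq_abs _ _ L).
Qed.

Lemma CV_radius_qratio_gt0 : Rbar_lt 0 (CV_radius g).
Proof.
  destruct (Rlt_or_le 1 (Rabs q)) as [gt1 | le1].
  - now rewrite (CV_radius_infinite_DAlembert g qratio_neq0 (is_lim_qratio_gt1 gt1)).
  - assert (q1 : 0 < Rabs (1 - q)).
    { apply Rabs_pos_lt; rewrite <- (pow_1 q); apply one_sub_pow_neq0; lia. }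
    rewrite (CV_radius_finite_DAlembert g _ qratio_neq0 q1 (is_lim_qratio_lt1 ltac:(lra))).
    now apply Rinv_0_lt_compat.
Qed.

Lemma qratio_terms_lower_bound (rho : R) : Rabs q < 1 -> 1 <= rho * Rabs (1 - q) ->
  forall n, exp (- (Rabs q / (1 - Rabs q))) <= Rabs (g n) * rho ^ n.
Proof.
  intros hq1 hrho; set (Q := Rabs q).
  assert (Q0 : 0 <= Q) by apply Rabs_pos.
  assert (Q1 : Q < 1) by exact hq1.
  (* (Q - Q^(n+1)) / (1 - Q) = Q + ... + Q^n, and the n-th step costs a factor
     1 / |1 - q^(n+1)| >= 1 / (1 + Q^(n+1)) >= exp (- Q^(n+1)). *)
  assert (inv : forall n, exp (- ((Q - Q ^ S n) / (1 - Q))) <= Rabs (g n) * rho ^ n).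
  { induction n as [|n IH].
    - rewrite g0, Rabs_R1, pow_1, Rminus_diag; unfold Rdiv.
      rewrite Rmult_0_l, Ropp_0, exp_0; simpl; lra.
    - pose proof (one_sub_pow_neq0 (S n) ltac:(lia)) as hn.
      assert (step : Rabs (g (S n)) * rho ^ S n
                     = Rabs (g n) * rho ^ n * (rho * Rabs (1 - q) / Rabs (1 - q ^ S n))).
      { replace (g (S n)) with (g n * ((1 - q) / (1 - q ^ S n)))
          by (rewrite <- qratio_S; field; apply qratio_neq0).
        rewrite Rabs_mult, Rabs_div by exact hn; simpl; field.
        now apply Rabs_no_R0. }
      assert (factor : exp (- Q ^ S n) <= rho * Rabs (1 - q) / Rabs (1 - q ^ S n)).
      { assert (den : 0 < Rabs (1 - q ^ S n) <= 1 + Q ^ S n).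
        { split; [now apply Rabs_pos_lt|].
          pose proof (Rabs_triang 1 (- q ^ S n)) as tri.
          rewrite Rabs_R1, Rabs_Ropp, <- RPow_abs in tri; exact tri. }
        apply (Rle_trans _ (/ Rabs (1 - q ^ S n))); [now apply exp_opp_le_Rinv|].
        unfold Rdiv; rewrite <- (Rmult_1_l (/ _)) at 1.
        apply Rmult_le_compat_r; [left; apply Rinv_0_lt_compat|]; lra. }
      rewrite step.
      replace (- ((Q - Q ^ S (S n)) / (1 - Q))) with
        (- ((Q - Q ^ S n) / (1 - Q)) + - Q ^ S n) by (simpl; field; lra).
      rewrite exp_plus; apply Rmult_le_compat; auto; left; apply exp_pos. }
  intros n; eapply Rle_trans; [|apply inv].
  assert (le : - (Q / (1 - Q)) <= - ((Q - Q ^ S n) / (1 - Q))).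
  { pose proof (pow_le Q (S n) Q0); apply Ropp_le_contravar; unfold Rdiv.
    apply Rmult_le_compat_r; [left; apply Rinv_0_lt_compat|]; lra. }
  destruct le as [lt | eq]; [left; now apply exp_increasing | now rewrite eq].
Qed.

Lemma CV_disk_qratio (rho : R) : 0 <= rho ->
  is_lim_seq (fun n => Rabs (g n) * rho ^ n) 0 -> CV_disk g rho.
Proof.
  intros hrho lim0.
  destruct (Rlt_or_le 1 (Rabs q)) as [gt1 | le1].
  - apply (CV_disk_DAlembert g rho 0 qratio_neq0 (is_lim_qratio_gt1 gt1)); now left.
  - assert (q1 : 0 < Rabs (1 - q)).
    { apply Rabs_pos_lt; rewrite <- (pow_1 q); apply one_sub_pow_neq0; lia. }
    destruct (Rlt_or_le (rho * Rabs (1 - q)) 1) as [small | big].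
    + apply (CV_disk_DAlembert g rho _ qratio_neq0 (is_lim_qratio_lt1 ltac:(lra))).
      right; split; [lra|]; rewrite Rabs_pos_eq by exact hrho.
      apply (Rmult_lt_reg_r (Rabs (1 - q))); [exact q1|]; rewrite Rinv_l; lra.
    + (* on and beyond the boundary circle the terms stay away from 0 *)
      exfalso.
      pose proof (is_lim_seq_le _ _ _ _ (qratio_terms_lower_bound rho ltac:(lra) big)
                    (is_lim_seq_const _) lim0) as le0.
      simpl in le0; pose proof (exp_pos (- (Rabs q / (1 - Rabs q)))); lra.
Qed.

End QRatio.

(** * Complex series and complex-valued derivatives *)

Lemma is_series_delta {K : AbsRing} {V : NormedModule K} (u : nat -> V) :
  (forall n, u (S n) = zero) -> is_series u (u 0%nat).
Proof.
  intros u0.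
  assert (partial : forall n, sum_n u n = u 0%nat).
  { induction n as [|n IH]; [apply sum_O|].
    now rewrite sum_Sn, IH, u0, plus_zero_r. }
  unfold is_series; eapply filterlim_ext; [intros n; symmetry; apply partial|].
  apply filterlim_const.
Qed.

Lemma sum_n_fst (u : nat -> C) (n : nat) : fst (sum_n u n) = sum_n (fun k => fst (u k)) n.
Proof. induction n as [|n IH]; [now rewrite !sum_O | now rewrite !sum_Sn, <- IH]. Qed.

Lemma sum_n_snd (u : nat -> C) (n : nat) : snd (sum_n u n) = sum_n (fun k => snd (u k)) n.
Proof. induction n as [|n IH]; [now rewrite !sum_O | now rewrite !sum_Sn, <- IH]. Qed.

Section ComplexSeries.
Implicit Types (u v : nat -> C) (l : C).

Lemma is_series_fst u l :
  @is_series R_AbsRing C_R_NormedModule u l -> is_series (fun n => fst (u n)) (fst l).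
Proof.
  intros H; unfold is_series in *.
  eapply filterlim_ext; [intros n; apply sum_n_fst|].
  destruct l; eapply filterlim_comp; [exact H | apply continuous_fst].
Qed.

Lemma is_series_snd u l :
  @is_series R_AbsRing C_R_NormedModule u l -> is_series (fun n => snd (u n)) (snd l).
Proof.
  intros H; unfold is_series in *.
  eapply filterlim_ext; [intros n; apply sum_n_snd|].
  destruct l; eapply filterlim_comp; [exact H | apply continuous_snd].
Qed.

Lemma Cseries_unique u l : @is_series R_AbsRing C_R_NormedModule u l -> Cseries u = l.
Proof.
  intros H; unfold Cseries; destruct l as [l1 l2]; f_equal.
  - exact (is_series_unique _ _ (is_series_fst _ _ H)).
  - exact (is_series_unique _ _ (is_series_snd _ _ H)).
Qed.

Lemma Cseries_correct u : Cseries_conv u -> @is_series R_AbsRing C_R_NormedModule u (Cseries u).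
Proof. intros [l H]; now rewrite (Cseries_unique _ _ H). Qed.

Lemma Cseries_conv_fst u : Cseries_conv u -> ex_series (fun n => fst (u n)).
Proof. intros [l H]; exists (fst l); now apply is_series_fst. Qed.

Lemma Cseries_conv_snd u : Cseries_conv u -> ex_series (fun n => snd (u n)).
Proof. intros [l H]; exists (snd l); now apply is_series_snd. Qed.

Lemma Rabs_fst_le_Cmod (z : C) : Rabs (fst z) <= Cmod z.
Proof. pose proof (Rmax_Cmod z); pose proof (Rmax_l (Rabs (fst z)) (Rabs (snd z))); lra. Qed.

Lemma Rabs_snd_le_Cmod (z : C) : Rabs (snd z) <= Cmod z.
Proof. pose proof (Rmax_Cmod z); pose proof (Rmax_r (Rabs (fst z)) (Rabs (snd z))); lra. Qed.

Lemma Cmod_le_Rabs_fst_snd (z : C) : Cmod z <= Rabs (fst z) + Rabs (snd z).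
Proof.
  pose proof (Rabs_pos (fst z)); pose proof (Rabs_pos (snd z)).
  unfold Cmod; rewrite <- (sqrt_pow2 (Rabs (fst z) + Rabs (snd z))) by lra.
  apply sqrt_le_1_alt; rewrite <- (pow2_abs (fst z)), <- (pow2_abs (snd z)); nra.
Qed.

Lemma Cseries_conv_lim0 u : Cseries_conv u -> is_lim_seq (fun n => Cmod (u n)) 0.
Proof.
  intros H.
  assert (L : is_lim_seq (fun n => Rabs (fst (u n)) + Rabs (snd (u n))) (0 + 0)).
  { apply is_lim_seq_plus'; apply -> is_lim_seq_abs_0; apply ex_series_lim_0.
    - now apply Cseries_conv_fst.
    - now apply Cseries_conv_snd. }
  rewrite Rplus_0_r in L.
  apply (is_lim_seq_le_le _ _ _ 0 (fun n => conj (Cmod_ge_0 (u n)) (Cmod_le_Rabs_fst_snd (u n))));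
    [apply is_lim_seq_const | exact L].
Qed.

Lemma ex_series_Rabs_fst u :
  ex_series (fun n => Cmod (u n)) -> ex_series (fun n => Rabs (fst (u n))).
Proof.
  apply (@ex_series_le R_AbsRing R_CompleteNormedModule).
  intros n; change norm with Rabs; simpl; rewrite Rabs_Rabsolu; apply Rabs_fst_le_Cmod.
Qed.

Lemma ex_series_Rabs_snd u :
  ex_series (fun n => Cmod (u n)) -> ex_series (fun n => Rabs (snd (u n))).
Proof.
  apply (@ex_series_le R_AbsRing R_CompleteNormedModule).
  intros n; change norm with Rabs; simpl; rewrite Rabs_Rabsolu; apply Rabs_snd_le_Cmod.
Qed.

Lemma Cseries_mult u v :
  ex_series (fun n => Cmod (u n)) -> ex_series (fun n => Cmod (v n)) ->
  Cseries (fun n => sum_n (fun k => Cmult (u k) (v (n - k)%nat)) n)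
  = Cmult (Cseries u) (Cseries v).
Proof.
  intros hu hv.
  set (u1 n := fst (u n)); set (u2 n := snd (u n)).
  set (v1 n := fst (v n)); set (v2 n := snd (v n)).
  assert (product : forall (a b : nat -> R),
    ex_series (fun n => Rabs (a n)) -> ex_series (fun n => Rabs (b n)) ->
    is_series (fun n => sum_f_R0 (fun k => a k * b (n - k)%nat) n) (Series a * Series b)).
  { intros a b ha hb; apply is_series_mult; auto;
      now apply Series_correct, ex_series_Rabs. }
  pose proof (ex_series_Rabs_fst u hu) as hu1; pose proof (ex_series_Rabs_snd u hu) as hu2.
  pose proof (ex_series_Rabs_fst v hv) as hv1; pose proof (ex_series_Rabs_snd v hv) as hv2.
  transitivity ((Series u1 * Series v1 - Series u2 * Series v2,
                 Series u1 * Series v2 + Series u2 * Series v1) : C); [|reflexivity].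
  unfold Cseries; f_equal; apply is_series_unique.
  - eapply is_series_ext; [|exact (is_series_minus _ _ _ _ (product u1 v1 hu1 hv1)
                                                  (product u2 v2 hu2 hv2))].
    intros n; cbv beta; rewrite sum_n_fst, sum_n_Reals.
    change (plus ?a (opp ?b)) with (a - b); rewrite <- minus_sum; apply sum_eq; reflexivity.
  - eapply is_series_ext; [|exact (is_series_plus _ _ _ _ (product u1 v2 hu1 hv2)
                                                 (product u2 v1 hu2 hv1))].
    intros n; cbv beta; rewrite sum_n_snd, sum_n_Reals.
    change (plus ?a ?b) with (a + b); rewrite <- plus_sum; apply sum_eq; reflexivity.
Qed.

End ComplexSeries.

Lemma sum_n_RtoC (a : nat -> R) (n : nat) :
  sum_n (fun k => RtoC (a k)) n = RtoC (sum_n a n).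
Proof.
  induction n as [|n IH]; [now rewrite !sum_O|].
  rewrite !sum_Sn, IH; symmetry; apply RtoC_plus.
Qed.

Lemma is_derive_pair (f1 f2 : R -> R) (x l1 l2 : R) :
  is_derive f1 x l1 -> is_derive f2 x l2 ->
  @is_derive R_AbsRing C_R_NormedModule (fun y => (f1 y, f2 y) : C) x ((l1, l2) : C).
Proof.
  intros H1 H2; unfold is_derive in *.
  apply (filterdiff_comp'_2 f1 f2 (fun u v => (u, v) : C) x _ _ (fun u v => (u, v) : C) H1 H2).
  assert (eta : forall y : prod_NormedModule R_AbsRing R_NormedModule R_NormedModule,
                (fst y, snd y) = y) by (intros [u v]; reflexivity).
  apply (filterdiff_ext_lin _ (fun y => y)); [|intros y; symmetry; apply eta].
  apply (filterdiff_ext (fun y => y)); [intros y; symmetry; apply eta | apply filterdiff_id].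
Qed.

(** * Generalized Fibonacci numbers and the coefficients of Exp *)

Section Roots.
Variables s t : R.
Hypothesis hd : s ^ 2 + 4 * t > 0.

Lemma phi_add_phi' : phi s t + phi' s t = s.
Proof. unfold phi, phi'; lra. Qed.

Lemma phi_sub_phi' : phi s t - phi' s t = sqrt (s ^ 2 + 4 * t).
Proof. unfold phi, phi'; lra. Qed.

Lemma phi_sub_phi'_gt0 : 0 < phi s t - phi' s t.
Proof. rewrite phi_sub_phi'; apply sqrt_lt_R0; lra. Qed.

Lemma phi_neq_phi' : phi s t <> phi' s t.
Proof. pose proof phi_sub_phi'_gt0; lra. Qed.

Lemma phi_mul_phi' : phi s t * phi' s t = - t.
Proof.
  pose proof (sqrt_sqrt (s ^ 2 + 4 * t) ltac:(lra)).
  unfold phi, phi'; nra.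
Qed.

Lemma phi_neq0 (ht : t <> 0) : phi s t <> 0.
Proof. intros e; pose proof phi_mul_phi' as prod; rewrite e, Rmult_0_l in prod; lra. Qed.

Lemma Rabs_phi_neq (hs : s <> 0) : Rabs (phi s t) <> Rabs (phi' s t).
Proof.
  intros habs; apply Rsqr_eq_asb_1 in habs; unfold Rsqr in habs.
  pose proof phi_sub_phi'_gt0; pose proof phi_add_phi'.
  assert (hprod : (phi s t + phi' s t) * (phi s t - phi' s t) = 0) by nra.
  apply Rmult_integral in hprod; lra.
Qed.

End Roots.

Section Binet.
Variables s t u v : R.
Hypotheses (huv_add : u + v = s) (huv_mul : u * v = - t).

Lemma fibst_binet (n : nat) : (u - v) * fibst s t n = u ^ n - v ^ n.
Proof.
  enough (H : (u - v) * fibst s t n = u ^ n - v ^ n /\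
              (u - v) * fibst s t (S n) = u ^ S n - v ^ S n) by apply H.
  induction n as [|n [IH1 IH2]]; [simpl; split; ring|].
  split; [exact IH2|].
  change (fibst s t (S (S n))) with (s * fibst s t (S n) + t * fibst s t n).
  transitivity (s * ((u - v) * fibst s t (S n)) + t * ((u - v) * fibst s t n)); [ring|].
  rewrite IH1, IH2, <- huv_add, <- (Ropp_involutive t), <- huv_mul; simpl; ring.
Qed.

Lemma fibst_add (huv : u <> v) (k j : nat) :
  fibst s t (k + j) = u ^ j * fibst s t k + v ^ k * fibst s t j.
Proof.
  apply (Rmult_eq_reg_l (u - v)); [|lra].
  transitivity (u ^ j * ((u - v) * fibst s t k) + v ^ k * ((u - v) * fibst s t j));
    [|ring].
  rewrite !fibst_binet, !pow_add; ring.
Qed.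

End Binet.

Lemma binom2_S (n : nat) : binom2 (S n) = (binom2 n + n)%nat.
Proof.
  unfold binom2.
  replace (S n * (S n - 1))%nat with (n * (n - 1) + n * 2)%nat
    by (destruct n; simpl; [reflexivity | rewrite Nat.sub_0_r; nia]).
  rewrite Nat.div_add by lia; reflexivity.
Qed.

Definition expst_coef (s t r : R) (n : nat) : R := r ^ binom2 n / fibtorial s t n.

Lemma expst_coef_0 (s t r : R) : expst_coef s t r 0 = 1.
Proof. unfold expst_coef, binom2; simpl; field. Qed.

Section Coef.
(* r, r' are phi, phi' in either order. *)
Variables s t r r' : R.
Hypotheses (hrr_add : r + r' = s) (hrr_mul : r * r' = - t).
Hypotheses (ht : t <> 0) (hrr_abs : Rabs r <> Rabs r').

Lemma root_neq0 : r <> 0.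
Proof. intros r0; rewrite r0 in hrr_mul; lra. Qed.

Lemma Rabs_root_ratio_neq1 : Rabs (r' / r) <> 1.
Proof.
  pose proof root_neq0.
  rewrite Rabs_div by assumption; intros h; apply hrr_abs.
  apply (Rmult_eq_compat_r (Rabs r)) in h.
  field_simplify in h; [lra | now apply Rabs_no_R0].
Qed.

Lemma one_sub_root_ratio_pow (n : nat) :
  1 - (r' / r) ^ n = (r - r') * fibst s t n / r ^ n.
Proof.
  pose proof root_neq0.
  rewrite (fibst_binet s t r r') by assumption.
  unfold Rdiv; rewrite Rpow_mult_distr, pow_inv; field; now apply pow_nonzero.
Qed.

Lemma fibst_neq0 (n : nat) : (0 < n)%nat -> fibst s t n <> 0.
Proof.
  intros hn f0.
  apply (pow_neq1 (r' / r) n Rabs_root_ratio_neq1 hn).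
  enough (1 - (r' / r) ^ n = 0) by lra.
  rewrite one_sub_root_ratio_pow, f0; unfold Rdiv; ring.
Qed.

Lemma fibtorial_neq0 (n : nat) : fibtorial s t n <> 0.
Proof.
  induction n as [|n IH]; [simpl; lra|].
  change (fibtorial s t n * fibst s t (S n) <> 0).
  apply Rmult_integral_contrapositive; split; [exact IH | apply fibst_neq0; lia].
Qed.

Lemma expst_coef_S (x : R) (n : nat) :
  fibst s t (S n) * expst_coef s t x (S n) = x ^ n * expst_coef s t x n.
Proof.
  unfold expst_coef; rewrite binom2_S, pow_add.
  change (fibtorial s t (S n)) with (fibtorial s t n * fibst s t (S n)).
  pose proof (fibtorial_neq0 n); pose proof (fibst_neq0 (S n) ltac:(lia)).
  field; split; assumption.
Qed.

Lemma expst_coef_ratio (n : nat) :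
  expst_coef s t r (S n) * (1 - (r' / r) ^ S n) = expst_coef s t r n * (1 - r' / r).
Proof.
  pose proof root_neq0 as r0; pose proof (pow_nonzero r n r0).
  rewrite <- (pow_1 (r' / r)) at 2.
  rewrite !one_sub_root_ratio_pow.
  transitivity ((fibst s t (S n) * expst_coef s t r (S n)) * (r - r') / r ^ S n);
    [field; now apply pow_nonzero|].
  rewrite expst_coef_S; simpl; field; split; assumption.
Qed.

Lemma CV_radius_expst_coef_gt0 : Rbar_lt 0 (CV_radius (expst_coef s t r)).
Proof.
  exact (CV_radius_qratio_gt0 _ _ (expst_coef_0 s t r) Rabs_root_ratio_neq1 expst_coef_ratio).
Qed.

Lemma expst_series_abs_conv (z : C) :
  Cseries_conv (fun n => Cmult (RtoC (expst_coef s t r n)) (Cpow z n)) ->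
  ex_series (fun n => Cmod (Cmult (RtoC (expst_coef s t r n)) (Cpow z n))).
Proof.
  intros hz.
  assert (Cmod_term : forall n, Cmod (Cmult (RtoC (expst_coef s t r n)) (Cpow z n))
                                = Rabs (expst_coef s t r n) * Cmod z ^ n)
    by (intros n; rewrite Cmod_mult, Cmod_R, Cmod_pow; reflexivity).
  apply (ex_series_ext (fun n => Rabs (expst_coef s t r n * Cmod z ^ n))).
  { intros n; rewrite Cmod_term, Rabs_mult, (Rabs_pos_eq (_ ^ n));
      [reflexivity | apply pow_le, Cmod_ge_0]. }
  apply (CV_disk_qratio _ _ (expst_coef_0 s t r) Rabs_root_ratio_neq1 expst_coef_ratio
           _ (Cmod_ge_0 z)).
  exact (is_lim_seq_ext _ _ _ Cmod_term (Cseries_conv_lim0 _ hz)).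
Qed.

End Coef.

Section CauchyCoef.
Variables (f : nat -> R) (u v : R) (c d : nat -> R).
Hypotheses (f0 : f 0%nat = 0) (f_add : forall k j, f (k + j)%nat = u ^ j * f k + v ^ k * f j).
Hypotheses (c_rec : forall k, f (S k) * c (S k) = u ^ k * c k)
           (d_rec : forall j, f (S j) * d (S j) = - (v ^ j * d j)).

Definition cauchy_coef (n : nat) : R := sum_f_R0 (fun k => c k * d (n - k)%nat) n.

Lemma cauchy_coef_rec (M : nat) :
  f (S M) * cauchy_coef (S M) = (u ^ M - v ^ M) * cauchy_coef M.
Proof.
  unfold cauchy_coef; rewrite scal_sum.
  (* f (S M) = u^(S M - k) f k + v^k f (S M - k) splits the k-th term; after the
     recursions for c and d, each half is the previous sum times u^M, resp. - v^M. *)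
  set (A k := u ^ (S M - k) * (f k * c k) * d (S M - k)%nat).
  set (B k := v ^ k * c k * (f (S M - k) * d (S M - k)%nat)).
  rewrite (sum_eq _ (fun k => A k + B k)).
  2: { intros k hk; unfold A, B.
       replace (f (S M)) with (f (k + (S M - k))%nat) by (f_equal; lia).
       rewrite f_add; ring. }
  rewrite plus_sum.
  assert (sumA : sum_f_R0 A (S M) = u ^ M * sum_f_R0 (fun k => c k * d (M - k)%nat) M).
  { rewrite decomp_sum by lia; unfold A at 1; rewrite f0, scal_sum; simpl pred.
    rewrite Rmult_0_l, Rmult_0_r, Rmult_0_l, Rplus_0_l; apply sum_eq; intros k hk.
    unfold A; replace (S M - S k)%nat with (M - k)%nat by lia; rewrite c_rec.
    replace (u ^ M) with (u ^ k * u ^ (M - k)) by (rewrite <- pow_add; f_equal; lia); ring. }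
  assert (sumB : sum_f_R0 B (S M) = - v ^ M * sum_f_R0 (fun k => c k * d (M - k)%nat) M).
  { rewrite tech5; unfold B at 2; rewrite Nat.sub_diag, f0, scal_sum.
    rewrite Rmult_0_l, Rmult_0_r, Rplus_0_r; apply sum_eq; intros k hk.
    unfold B; replace (S M - k)%nat with (S (M - k)) by lia; rewrite d_rec.
    replace (v ^ M) with (v ^ k * v ^ (M - k)) by (rewrite <- pow_add; f_equal; lia); ring. }
  rewrite sumA, sumB; ring.
Qed.

Lemma cauchy_coef_0 : c 0%nat = 1 -> d 0%nat = 1 -> cauchy_coef 0 = 1.
Proof. intros c0 d0; unfold cauchy_coef; simpl; rewrite c0, d0; ring. Qed.

Lemma cauchy_coef_S (f_neq0 : forall n, f (S n) <> 0) (n : nat) : cauchy_coef (S n) = 0.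
Proof.
  induction n as [|n IH];
    [ pose proof (cauchy_coef_rec 0) as rec; rewrite !pow_O, Rminus_diag, Rmult_0_l in rec
    | pose proof (cauchy_coef_rec (S n)) as rec; rewrite IH, Rmult_0_r in rec ];
    apply Rmult_integral in rec as [fS0 | cS0]; solve [contradiction (f_neq0 _ fS0) | exact cS0].
Qed.

End CauchyCoef.

(** * The (s,t)-exponential *)

Section Exp.
Variables s t : R.
Hypotheses (hs : s <> 0) (ht : t <> 0) (hd : s ^ 2 + 4 * t > 0).

Let roots_add : phi s t + phi' s t = s := phi_add_phi' s t.
Let roots_mul : phi s t * phi' s t = - t := phi_mul_phi' s t hd.
Let roots_abs : Rabs (phi s t) <> Rabs (phi' s t) := Rabs_phi_neq s t hd hs.
Let roots_add' : phi' s t + phi s t = s := eq_trans (Rplus_comm _ _) roots_add.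
Let roots_mul' : phi' s t * phi s t = - t := eq_trans (Rmult_comm _ _) roots_mul.
Let roots_abs' : Rabs (phi' s t) <> Rabs (phi s t) := not_eq_sym roots_abs.

Lemma ExpTerm_mul_ExpTerm'_opp (z : C) (k n : nat) : (k <= n)%nat ->
  Cmult (ExpTerm s t z k) (ExpTerm' s t (Copp z) (n - k)) =
  Cmult (RtoC (expst_coef s t (phi s t) k * (expst_coef s t (phi' s t) (n - k) * (-1) ^ (n - k))))
        (Cpow z n).
Proof.
  intros hk.
  change (ExpTerm s t z k) with (Cmult (RtoC (expst_coef s t (phi s t) k)) (Cpow z k)).
  change (ExpTerm' s t ?w ?j) with (Cmult (RtoC (expst_coef s t (phi' s t) j)) (Cpow w j)).
  replace (Copp z) with (Cmult (RtoC (-1)) z) by (apply injective_projections; simpl; ring).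
  replace (Cpow z n) with (Cmult (Cpow z k) (Cpow z (n - k)))
    by (rewrite <- Cpow_add_r; f_equal; lia).
  rewrite Cpow_mult_l, <- RtoC_pow, !RtoC_mult; ring.
Qed.

Lemma Exp_mul_Exp'_opp (z : C) : Exp_conv s t z -> Exp'_conv s t (Copp z) ->
  Cmult (Exp s t z) (Exp' s t (Copp z)) = RtoC 1.
Proof.
  intros hE hE'.
  pose proof (expst_series_abs_conv s t _ _ roots_add roots_mul ht roots_abs z hE) as hA.
  pose proof (expst_series_abs_conv s t _ _ roots_add' roots_mul' ht roots_abs' _ hE') as hB.
  set (c := expst_coef s t (phi s t)).
  set (d j := expst_coef s t (phi' s t) j * (-1) ^ j).
  unfold Exp, Exp'; rewrite <- (Cseries_mult (ExpTerm s t z) (ExpTerm' s t (Copp z)) hA hB).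
  apply Cseries_unique.
  apply (is_series_ext (fun n => Cmult (RtoC (cauchy_coef c d n)) (Cpow z n))).
  { intros n; transitivity (sum_n (fun k => mult (RtoC (c k * d (n - k)%nat)) (Cpow z n)) n).
    - rewrite sum_n_mult_r, sum_n_RtoC, sum_n_Reals; reflexivity.
    - apply sum_n_ext_loc; intros k hk; now rewrite ExpTerm_mul_ExpTerm'_opp. }
  assert (f_add := fibst_add s t _ _ roots_add roots_mul (phi_neq_phi' s t hd)).
  assert (c_rec : forall k, fibst s t (S k) * c (S k) = phi s t ^ k * c k)
    by apply (expst_coef_S s t _ _ roots_add roots_mul ht roots_abs).
  assert (d_rec : forall j, fibst s t (S j) * d (S j) = - (phi' s t ^ j * d j)).
  { intros j; unfold d; rewrite <- Rmult_assoc.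
    rewrite (expst_coef_S s t _ _ roots_add roots_mul ht roots_abs); simpl; ring. }
  assert (d0 : d 0%nat = 1) by (unfold d; rewrite expst_coef_0; simpl; ring).
  replace (RtoC 1) with (Cmult (RtoC (cauchy_coef c d 0)) (Cpow z 0))
    by (rewrite (cauchy_coef_0 c d (expst_coef_0 _ _ _) d0);
        apply injective_projections; simpl; ring).
  apply is_series_delta; intros n.
  rewrite (cauchy_coef_S (fibst s t) _ _ c d eq_refl f_add c_rec d_rec).
  - apply injective_projections; simpl; ring.
  - intros m; apply (fibst_neq0 s t _ _ roots_add roots_mul ht roots_abs); lia.
Qed.

Lemma ExpTerm_sub (z : C) (m : nat) :
  Cminus (ExpTerm s t (Cmult (RtoC (phi s t)) z) (S m))
         (ExpTerm s t (Cmult (RtoC (phi' s t)) z) (S m))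
  = Cmult (Cmult (RtoC (phi s t - phi' s t)) z) (ExpTerm s t (Cmult (RtoC (phi s t)) z) m).
Proof.
  set (c := expst_coef s t (phi s t)).
  assert (key : c (S m) * (phi s t ^ S m - phi' s t ^ S m)
                = (phi s t - phi' s t) * (phi s t ^ m * c m)).
  { rewrite <- (fibst_binet s t _ _ roots_add roots_mul).
    rewrite <- (expst_coef_S s t _ _ roots_add roots_mul ht roots_abs); unfold c; ring. }
  change (ExpTerm s t ?w ?n) with (Cmult (RtoC (c n)) (Cpow w n)).
  rewrite !Cpow_mult_l, <- !RtoC_pow.
  transitivity (Cmult (RtoC (c (S m) * (phi s t ^ S m - phi' s t ^ S m))) (Cpow z (S m)));
    [rewrite RtoC_mult, RtoC_minus; ring|].
  rewrite key, !RtoC_mult, Cpow_S; ring.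
Qed.

Lemma Exp_sub (z : C) :
  Exp_conv s t (Cmult (RtoC (phi s t)) z) -> Exp_conv s t (Cmult (RtoC (phi' s t)) z) ->
  Cminus (Exp s t (Cmult (RtoC (phi s t)) z)) (Exp s t (Cmult (RtoC (phi' s t)) z))
  = Cmult (Cmult (RtoC (phi s t - phi' s t)) z) (Exp s t (Cmult (RtoC (phi s t)) z)).
Proof.
  intros hu hv.
  set (u := ExpTerm s t (Cmult (RtoC (phi s t)) z)) in *.
  set (v := ExpTerm s t (Cmult (RtoC (phi' s t)) z)) in *.
  set (K := Cmult (RtoC (phi s t - phi' s t)) z).
  pose proof (Cseries_correct u hu) as Hu; pose proof (Cseries_correct v hv) as Hv.
  assert (shift_sub : is_series (fun n => Cminus (u (S n)) (v (S n)))
                                (Cminus (Exp s t (Cmult (RtoC (phi s t)) z))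
                                        (Exp s t (Cmult (RtoC (phi' s t)) z)))).
  { apply (is_series_incr_1 (fun n => Cminus (u n) (v n))).
    replace (Cminus (u 0%nat) (v 0%nat)) with (@zero C_AbelianGroup)
      by (unfold u, v, ExpTerm; apply injective_projections; simpl; ring).
    rewrite plus_zero_r; exact (is_series_minus _ _ _ _ Hu Hv). }
  assert (shift_scal : is_series (fun n => Cminus (u (S n)) (v (S n)))
                                 (Cmult K (Exp s t (Cmult (RtoC (phi s t)) z)))).
  { eapply is_series_ext; [intros n; symmetry; apply ExpTerm_sub|].
    exact (@is_series_scal_l C_AbsRing C_NormedModule K u _ Hu). }
  rewrite <- (Cseries_unique _ _ shift_sub); exact (Cseries_unique _ _ shift_scal).
Qed.

Lemma Exp_0 : Exp s t (RtoC 0) = RtoC 1.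
Proof.
  apply Cseries_unique.
  replace (RtoC 1) with (ExpTerm s t (RtoC 0) 0)
    by (unfold ExpTerm, binom2; simpl; apply injective_projections; simpl; field).
  apply is_series_delta; intros n.
  unfold ExpTerm; rewrite Cpow_S, Cmult_0_l, Cmult_0_r; reflexivity.
Qed.

Lemma Exp_scaled_PSeries (a : C) (x : R) :
  Exp s t (Cmult a (RtoC x)) =
  (PSeries (fun n => expst_coef s t (phi s t) n * fst (Cpow a n)) x,
   PSeries (fun n => expst_coef s t (phi s t) n * snd (Cpow a n)) x).
Proof.
  unfold Exp, Cseries, PSeries; f_equal; apply Series_ext; intros n;
    change (ExpTerm s t ?w n) with (Cmult (RtoC (expst_coef s t (phi s t) n)) (Cpow w n));
    rewrite Cpow_mult_l, <- RtoC_pow; simpl; ring.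
Qed.

Lemma is_derive_Exp_scaled_0 (a kappa : C) :
  @is_derive R_AbsRing C_R_NormedModule
    (fun x => Cmult kappa (Exp s t (Cmult a (RtoC x)))) 0 (Cmult a kappa).
Proof.
  set (c := expst_coef s t (phi s t)).
  set (Ar n := c n * fst (Cpow a n)); set (Ai n := c n * snd (Cpow a n)).
  assert (c1 : c 1%nat = 1) by (unfold c, expst_coef, binom2; simpl; field).
  assert (radius : forall b : nat -> R, (forall n, Rabs (b n) <= Rabs (c n) * Cmod a ^ n) ->
                   Rbar_lt (Rabs 0) (CV_radius b)).
  { intros b hb; rewrite Rabs_R0; apply (CV_radius_gt0_dominated b c (Cmod a) (Cmod_ge_0 a));
      [exact (CV_radius_expst_coef_gt0 s t _ _ roots_add roots_mul ht roots_abs) | exact hb]. }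
  assert (DAr : is_derive (PSeries Ar) 0 (fst a)).
  { replace (fst a) with (PSeries (PS_derive Ar) 0)
      by (rewrite PSeries_0; unfold PS_derive, Ar; rewrite c1; simpl; ring).
    apply is_derive_PSeries, radius; intros n; unfold Ar; rewrite Rabs_mult, <- Cmod_pow.
    apply Rmult_le_compat_l; [apply Rabs_pos | apply Rabs_fst_le_Cmod]. }
  assert (DAi : is_derive (PSeries Ai) 0 (snd a)).
  { replace (snd a) with (PSeries (PS_derive Ai) 0)
      by (rewrite PSeries_0; unfold PS_derive, Ai; rewrite c1; simpl; ring).
    apply is_derive_PSeries, radius; intros n; unfold Ai; rewrite Rabs_mult, <- Cmod_pow.
    apply Rmult_le_compat_l; [apply Rabs_pos | apply Rabs_snd_le_Cmod]. }
  apply (is_derive_ext (fun y => (fst kappa * PSeries Ar y - snd kappa * PSeries Ai y,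
                                  fst kappa * PSeries Ai y + snd kappa * PSeries Ar y) : C)).
  { intros y; rewrite Exp_scaled_PSeries; reflexivity. }
  replace (Cmult a kappa) with ((fst kappa * fst a - snd kappa * snd a,
                                 fst kappa * snd a + snd kappa * fst a) : C)
    by (apply injective_projections; simpl; ring).
  apply is_derive_pair.
  - apply @is_derive_minus; apply @is_derive_scal; assumption.
  - apply @is_derive_plus; apply @is_derive_scal; assumption.
Qed.

Lemma solves_at_Exp (a kappa : C) (f : R -> C) (x : R) :
  (forall y, f y = Cmult kappa (Exp s t (Cmult a (RtoC y)))) ->
  involved_conv s t a x -> solves_at s t a f x.
Proof.
  intros hf [_ [hphi hphi']]; unfold solves_at, Dst_is.
  destruct (Req_EM_T x 0) as [-> | hx].
  - apply (is_derive_ext (fun y => Cmult kappa (Exp s t (Cmult a (RtoC y)))));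
      [intros y; symmetry; apply hf|].
    rewrite hf, Rmult_0_r, Cmult_0_r, Exp_0.
    replace (Cmult a (Cmult kappa (RtoC 1))) with (Cmult a kappa) by ring.
    now apply is_derive_Exp_scaled_0.
  - assert (scaled : forall r, Cmult a (RtoC (r * x)) = Cmult (RtoC r) (Cmult a (RtoC x)))
      by (intros r; rewrite RtoC_mult; ring).
    rewrite !hf, !scaled.
    rewrite !scaled in hphi, hphi'.
    pose proof (Exp_sub _ hphi hphi') as feq.
    pose proof (phi_sub_phi'_gt0 s t hd) as gap.
    rewrite RtoC_mult.
    set (E1 := Exp s t (Cmult (RtoC (phi s t)) (Cmult a (RtoC x)))) in *.
    set (E2 := Exp s t (Cmult (RtoC (phi' s t)) (Cmult a (RtoC x)))) in *.
    replace (Cminus (Cmult kappa E1) (Cmult kappa E2)) with (Cmult kappa (Cminus E1 E2)) by ring.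
    rewrite feq; field; split; intros e; apply RtoC_inj in e; [contradiction | lra].
Qed.

End Exp.

Lemma solves_at_mul_invariant (s t : R) (a : C) (f p : R -> C) (x : R) :
  x <> 0 -> p (phi' s t * x) = p (phi s t * x) -> solves_at s t a f x ->
  solves_at s t a (fun y => Cmult (p y) (f y)) x.
Proof.
  unfold solves_at, Dst_is; intros hx hp; destruct (Req_EM_T x 0) as [|_]; [contradiction|].
  intros hf; rewrite hp, Cmult_assoc, (Cmult_comm a), <- Cmult_assoc, hf.
  unfold Cminus, Cdiv; ring.
Qed.

Theorem mainTheorem12 (s t : R) (a xi : C)
  (hs : s <> 0) (ht : t <> 0) (hd : s ^ 2 + 4 * t > 0) :
  (* (1) *)
  ((forall x : R, involved_conv s t a x ->
      solves_at s t a (fun x => Cmult xi (Exp s t (Cmult a (RtoC x)))) x)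
   /\ Cmult xi (Exp s t (Cmult a (RtoC 0))) = xi)
  /\
  (* (2) *)
  (forall eta : R,
     Exp_conv s t (Cmult a (RtoC eta)) ->
     Exp'_conv s t (Copp (Cmult a (RtoC eta))) ->
     let f := fun x : R => Cmult xi (Cmult (Exp s t (Cmult a (RtoC x)))
                                     (Exp' s t (Copp (Cmult a (RtoC eta))))) in
     (forall x : R, involved_conv s t a x -> solves_at s t a f x)
     /\ f eta = xi)
  /\
  (* (3) *)
  (forall eta : R, eta > 0 ->
     Exp_conv s t (Cmult a (RtoC eta)) ->
     Exp'_conv s t (Copp (Cmult a (RtoC eta))) ->
     let f := fun x : R => Cmult (Exp s t (Cmult a (RtoC x)))
                                 (Exp' s t (Copp (Cmult a (RtoC eta)))) in
     forall p : R -> C,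
       (forall y : R, y <> 0 -> p (phi' s t / phi s t * y) = p y) ->
       let g := fun x : R => Cmult (p x) (f x) in
       (forall x : R, x <> 0 -> involved_conv s t a x -> solves_at s t a g x)
       /\ g eta = p eta).
Proof.
  split; [split | split].
  - intros x hx; apply (solves_at_Exp s t hs ht hd a xi); [reflexivity | exact hx].
  - rewrite Cmult_0_r, Exp_0; ring.
  - intros eta hE hE' f; split.
    + intros x hx.
      apply (solves_at_Exp s t hs ht hd a (Cmult xi (Exp' s t (Copp (Cmult a (RtoC eta))))));
        [intros y; unfold f; ring | exact hx].
    + unfold f; rewrite (Exp_mul_Exp'_opp s t hs ht hd _ hE hE'); ring.
  - intros eta _ hE hE' f p hp g; split.
    + intros x hx0 hx; apply solves_at_mul_invariant; [exact hx0 | |].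
      * pose proof (phi_neq0 s t hd ht) as phi0.
        rewrite <- (hp (phi s t * x)) by now apply Rmult_integral_contrapositive.
        f_equal; field; exact phi0.
      * apply (solves_at_Exp s t hs ht hd a (Exp' s t (Copp (Cmult a (RtoC eta)))));
          [intros y; unfold f; ring | exact hx].
    + unfold g, f; rewrite (Exp_mul_Exp'_opp s t hs ht hd _ hE hE'); ring.
Qed.
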